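(* For every integer $n\ge1$, $$|\mathbb H_n^\circ|=n^4-(n-1)^4,\qquad |\mathbb H_n^{i,j}|=\frac{4!}{i!\,j!\,(4-i-j)!}(n-1)^{4-i-j}\quad\text{for all integers } 0<i,j \text{ with } i+j\le4 .$$
   Context: Let $\mathbb Z^4_H=\{\mathbf k\in\mathbb Z^4: k_1+k_2+k_3+k_4=0\}$ and $\mathbb H=\{\mathbf k\in\mathbb Z^4_H: k_1\equiv k_2\equiv k_3\equiv k_4\pmod 4\}$. Let $\mathbb H_n^\circ=\{\mathbf k\in\mathbb H: |k_i-k_l|<4n \text{ for all } i,l\}$. For $0<i,j$ with $i+j\le4$, let $\mathbb H_n^{i,j}$ be the set of $\mathbf k\in\mathbb H$ with $\max_lk_l-\min_lk_l=4n$ such that exactly $i$ coordinates of $\mathbf k$ equal $\max_lk_l$ and exactly $j$ coordinates equal $\min_lk_l$ (equivalently, $\mathbf k/(4n)$ lies on the boundary part $B^{i,j}$ of the rhombic dodecahedron $\{\mathbf t: t_1+\dots+t_4=0,\ |t_i-t_l|\le 1\}$ where exactly $i$ coordinates attain the maximum and $j$ the minimum, the two differing by $1$). *)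

From HB Require Import structures.
From mathcomp Require Import all_boot all_order all_algebra.
From mathcomp Require Import boolp classical_sets cardinality.
Set Implicit Arguments. Unset Strict Implicit. Unset Printing Implicit Defensive.
Import Order.TTheory GRing.Theory Num.Theory.
Local Open Scope ring_scope.

Definition pt := {ffun 'I_4 -> int}.

Definition inZ4H (k : pt) : bool := \sum_(i < 4) k i == 0.

Definition inH (k : pt) : bool :=
  inZ4H k && [forall i : 'I_4, forall l : 'I_4, (4 %| k i - k l)%Z].

Definition maxk (k : pt) : int := \big[Num.max/k ord0]_(l < 4) k l.
Definition mink (k : pt) : int := \big[Num.min/k ord0]_(l < 4) k l.

Definition Hcirc (n : nat) : set pt :=
  [set k | inH k /\ forall i l : 'I_4, `|k i - k l| < 4 * n%:Z].

Definition Hij (n i j : nat) : set pt :=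
  [set k | [/\ inH k, maxk k - mink k = 4 * n%:Z,
              #|[set l : 'I_4 | k l == maxk k]| = i
            & #|[set l : 'I_4 | k l == mink k]| = j]].

(* Shifting a point k of H so that its least coordinate is 0 and dividing by 4
   gives x in N^4 with a zero coordinate, and k = 4x - (x_1 + ... + x_4);
   moreover max k - min k = 4 max x.  Hence H_n^o is in bijection with the maps
   {0..3} -> {0..n-1} taking the value 0, of which there are n^4 - (n-1)^4, and
   H_n^{i,j} with the maps {0..3} -> {0..n} taking the value n exactly i times and
   0 exactly j times, of which there are 4!/(i! j! (4-i-j)!) (n-1)^(4-i-j). *)

From HB Require Import structures.
From mathcomp Require Import all_boot all_order all_algebra.
From mathcomp Require Import boolp classical_sets cardinality.
From mathcomp Require Import zify ring.
Import Order.TTheory GRing.Theory Num.Theory.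
Set Implicit Arguments. Unset Strict Implicit. Unset Printing Implicit Defensive.

Lemma bin_mul_bin_fact n i j : (i + j <= n)%N ->
  ('C(n, i) * 'C(n - i, j) * (i`! * j`! * (n - i - j)`!))%N = n`!.
Proof.
move=> ijn; have le_in : (i <= n)%N by lia.
have le_jni : (j <= n - i)%N by lia.
rewrite -(bin_fact le_in) -(bin_fact le_jni) -subnDA; ring.
Qed.

Lemma bin_mul_bin n i j : (i + j <= n)%N ->
  ('C(n, i) * 'C(n - i, j))%N = n`! %/ (i`! * j`! * (n - i - j)`!).
Proof.
by move=> ijn; rewrite -(bin_mul_bin_fact ijn) mulnK // !muln_gt0 !fact_gt0.
Qed.

Section FfunCounting.
Variables I T : finType.

Lemma card_ffun_hit (x : T) :
  #|[pred f : {ffun I -> T} | [exists l, f l == x]]| = (#|T| ^ #|I| - #|T|.-1 ^ #|I|)%N.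
Proof.
set A := [pred f : {ffun I -> T} | [exists l, f l == x]].
have -> : (#|T|.-1 ^ #|I|)%N = #|[predC A]|.
  rewrite -(cardC1 x) -card_ffun_on; apply: eq_card => f; rewrite !inE negb_exists.
  by apply/ffun_onP/forallP => H l; have := H l; rewrite !inE.
by rewrite -card_ffun -(cardC A) addnK.
Qed.

Lemma card_predC2 (x y : T) : x != y ->
  #|[pred t | (t != x) && (t != y)]| = (#|T| - 2)%N.
Proof.
move=> xy; have := cardC1 x; rewrite (cardD1 y) inE eq_sym xy.
have -> : #|[predD1 predC1 x & y]| = #|[pred t | (t != x) && (t != y)]|.
  by apply: eq_card => t; rewrite !inE andbC.
lia.
Qed.

Lemma card_ffun_preimages (x y : T) (A B : {set I}) : x != y -> [disjoint A & B] ->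
  #|[pred f : {ffun I -> T} | ([set l | f l == x] == A) && ([set l | f l == y] == B)]|
  = ((#|T| - 2) ^ #|~: (A :|: B)|)%N.
Proof.
move=> xy dAB.
have notAB l : l \in A -> l \in B -> False.
  by move=> lA lB; move/disjoint_setI0/setP/(_ l): dAB; rewrite !inE lA lB.
pose F l := if l \in A then pred1 x else if l \in B then pred1 y
            else [pred t | (t != x) && (t != y)].
rewrite (eq_card (B := family F)); last first.
  move=> f; rewrite !inE; apply/andP/familyP => [[/eqP eA /eqP eB] l | fF].
    rewrite /F -eA -eB !inE; case: eqP => [-> | nx]; first by rewrite inE.
    case: eqP => [-> | ny]; first by rewrite inE.
    by rewrite inE; apply/andP; split; apply/eqP.
  split; apply/eqP/setP => l; rewrite inE; have := fF l; rewrite /F.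
    case lA: (l \in A); first by rewrite inE => ->.
    case lB: (l \in B); rewrite !inE; first by move/eqP->; rewrite eq_sym (negbTE xy).
    by case/andP=> /negbTE ->.
  case lA: (l \in A).
    by rewrite inE => /eqP ->; rewrite (negbTE xy); case lB: (l \in B) => //; case: (notAB l).
  case lB: (l \in B); first by rewrite inE => ->.
  by rewrite !inE => /andP[_ /negbTE ->].
rewrite card_family foldrE big_map big_enum -prod_nat_const [RHS]big_mkcond /=.
apply: eq_bigr => l _; rewrite /F !inE.
case: (l \in A) => /=; first by rewrite card1.
case: (l \in B) => /=; first by rewrite card1.
exact: card_predC2.
Qed.

Lemma card_ffun_preimage_sizes (x y : T) (i j : nat) : x != y ->
  #|[pred f : {ffun I -> T} | (#|[set l | f l == x]| == i) && (#|[set l | f l == y]| == j)]|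
  = ('C(#|I|, i) * 'C(#|I| - i, j) * (#|T| - 2) ^ (#|I| - i - j))%N.
Proof.
move=> xy; rewrite -mulnA -sum1_card.
rewrite (partition_big (fun f : {ffun I -> T} => [set l | f l == x]) (fun A => #|A| == i)) /=;
  last by move=> f /andP[].
rewrite (eq_bigr (fun A => 'C(#|I| - i, j) * (#|T| - 2) ^ (#|I| - i - j)))%N.
  rewrite sum_nat_const -(card_draws I i); congr (_ * _)%N.
  by apply: eq_card => A; rewrite !inE.
move=> A /eqP cardA.
rewrite (partition_big (fun f : {ffun I -> T} => [set l | f l == y])
   (fun B => (B \subset ~: A) && (#|B| == j))) /=; last first.
  move=> f; rewrite !inE => /andP[/andP[_ ->] /eqP <-]; rewrite andbT.
  by apply/fintype.subsetP => l; rewrite !inE => /eqP ->; rewrite eq_sym.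
rewrite (eq_bigr (fun B => (#|T| - 2) ^ (#|I| - i - j)))%N.
  have cardCA : #|~: A| = (#|I| - i)%N by rewrite -cardA -(cardsC A) addKn.
  rewrite sum_nat_const -cardCA -cards_draws; congr (_ * _)%N.
  by apply: eq_card => B; rewrite !inE.
move=> B /andP[sBCA /eqP cardB].
have dAB : [disjoint A & B] by rewrite disjoint_sym finset.disjoints_subset.
rewrite -[LHS](@eq_bigl _ _ _ _ _ [pred f : {ffun I -> T} |
    ([set l | f l == x] == A) && ([set l | f l == y] == B)]); last first.
  move=> f; rewrite !inE; apply/idP/idP => [/andP[/eqP -> /eqP ->] | /andP[/andP[_ ->] ->] //].
  by rewrite cardA cardB !eqxx.
rewrite sum1_card card_ffun_preimages //; congr (_ ^ _)%N.
rewrite -(cardsC (A :|: B)) cardsU (disjoint_setI0 dAB) cards0 subn0 cardA cardB.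
lia.
Qed.
End FfunCounting.

Local Open Scope classical_set_scope.
Local Open Scope card_scope.

Lemma card_eq_finpred (T : finType) (P : {pred T}) : [set x | x \in P] #= `I_#|P|.
Proof.
have -> : [set x | x \in P] = @enum_val _ (mem P) @` setT.
  apply/seteqP; split => [x /= Px | _ [i _ <-] /=]; last exact: enum_valP.
  by exists (enum_rank_in Px x) => //; rewrite enum_rankK_in.
rewrite card_eq_sym; apply: card_eq_trans card_II _; rewrite card_eq_sym.
by apply: inj_card_eq => a b _ _; apply: enum_val_inj.
Qed.

Lemma card_eq_image_finpred (T : finType) (P : {pred T}) U (g : T -> U) :
  {in P &, injective g} -> g @` [set x | x \in P] #= `I_#|P|.
Proof.
move=> ginj; apply: card_eq_trans (card_eq_finpred P).
by apply: inj_card_eq => a b /set_mem Pa /set_mem Pb; apply: ginj.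
Qed.

Local Close Scope card_scope.
Local Close Scope classical_set_scope.

Local Open Scope ring_scope.

Definition embH (x : 'I_4 -> int) : pt := [ffun l => 4 * x l - \sum_(j < 4) x j].

Lemma embH_sub x i l : embH x i - embH x l = 4 * (x i - x l).
Proof. rewrite !ffunE; ring. Qed.

Lemma embH_inH x : inH (embH x).
Proof.
apply/andP; split.
  apply/eqP; under eq_bigr do rewrite ffunE.
  by rewrite sumrB -mulr_sumr sumr_const card_ord -mulr_natr; ring.
apply/forallP => i; apply/forallP => l.
by rewrite embH_sub dvdz_mulr // dvdzz.
Qed.

Lemma inH_embH (k : pt) l0 : inH k -> (forall l, k l0 <= k l) ->
  exists x : 'I_4 -> int, [/\ forall l, 4 * x l = k l - k l0, x l0 = 0 & embH x = k].
Proof.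
case/andP=> /eqP sum_k0 /forallP dvd_k le_k0.
pose x l := ((k l - k l0) %/ 4)%Z.
have xE l : 4 * x l = k l - k l0.
  by rewrite mulrC divzK //; exact: (forallP (dvd_k l) l0).
exists x; split => //.
  by apply: (@mulfI _ 4) => //; rewrite xE subrr mulr0.
have sum_x : \sum_(j < 4) x j = - k l0.
  apply: (@mulfI _ 4) => //; rewrite mulr_sumr (eq_bigr _ (fun j _ => xE j)).
  by rewrite sumrB sum_k0 sumr_const card_ord -mulr_natr; ring.
by apply/ffunP => l; rewrite ffunE xE sum_x; ring.
Qed.

Lemma mink_le (k : pt) l : mink k <= k l.
Proof. exact: bigmin_le. Qed.

Lemma le_maxk (k : pt) l : k l <= maxk k.
Proof. exact: le_bigmax. Qed.

Lemma mink_attained (k : pt) : exists l, mink k = k l.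
Proof.
rewrite /mink; elim/big_ind: _ => [|a b [la ->] [lb ->]|l _]; try by eexists.
by rewrite minEle; case: ifP => _; eexists.
Qed.

Lemma maxk_attained (k : pt) : exists l, maxk k = k l.
Proof.
rewrite /maxk; elim/big_ind: _ => [|a b [la ->] [lb ->]|l _]; try by eexists.
by rewrite maxEle; case: ifP => _; eexists.
Qed.

Lemma mink_eq (k : pt) l0 : (forall l, k l0 <= k l) -> mink k = k l0.
Proof.
move=> le_k0; have [l kl] := mink_attained k.
by apply/eqP; rewrite eq_le mink_le kl le_k0.
Qed.

Lemma maxk_eq (k : pt) l1 : (forall l, k l <= k l1) -> maxk k = k l1.
Proof.
move=> le_k1; have [l kl] := maxk_attained k.
by apply/eqP; rewrite eq_le le_maxk kl le_k1.
Qed.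

Definition embF {N} (f : {ffun 'I_4 -> 'I_N}) : pt := embH (fun l => (f l)%:Z).

Section EmbF.
Variable N : nat.
Implicit Types f : {ffun 'I_4 -> 'I_N.+1}.

Lemma embF_sub f i l : embF f i - embF f l = 4 * ((f i)%:Z - (f l)%:Z).
Proof. exact: embH_sub. Qed.

Lemma embF_eq f i l : (embF f i == embF f l) = (f i == f l).
Proof.
by rewrite -subr_eq0 embF_sub mulf_eq0 /= subr_eq0 eqz_nat.
Qed.

Lemma embF_inj f1 f2 l1 l2 : f1 l1 = ord0 -> f2 l2 = ord0 -> embF f1 = embF f2 -> f1 = f2.
Proof.
move=> f1l1 f2l2 e12.
have sub12 a b : (f1 a)%:Z - (f1 b)%:Z = (f2 a)%:Z - (f2 b)%:Z.
  by apply: (@mulfI _ 4) => //; rewrite -!embF_sub e12.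
apply/ffunP => i; apply/val_inj/eqP; rewrite -eqz_nat; apply/eqP.
have := sub12 i l1; have := sub12 l2 l1; rewrite f1l1 f2l2 /=; lia.
Qed.

Lemma mink_embF f l0 : f l0 = ord0 -> mink (embF f) = embF f l0.
Proof.
by move=> fl0; apply: mink_eq => l; rewrite -subr_ge0 embF_sub fl0 /=; lia.
Qed.

Lemma maxk_embF f l1 : f l1 = ord_max -> maxk (embF f) = embF f l1.
Proof.
move=> fl1; apply: maxk_eq => l; rewrite -subr_ge0 embF_sub fl1 /=.
by have := ltn_ord (f l); lia.
Qed.

Lemma minset_embF f l0 : f l0 = ord0 ->
  [set l | embF f l == mink (embF f)] = [set l | f l == ord0].
Proof. by move=> fl0; apply/setP => l; rewrite !inE (mink_embF fl0) embF_eq fl0. Qed.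

Lemma maxset_embF f l1 : f l1 = ord_max ->
  [set l | embF f l == maxk (embF f)] = [set l | f l == ord_max].
Proof. by move=> fl1; apply/setP => l; rewrite !inE (maxk_embF fl1) embF_eq fl1. Qed.

Lemma inH_embF (k : pt) : inH k -> maxk k - mink k < 4 * N.+1%:Z ->
  exists2 f : {ffun 'I_4 -> 'I_N.+1}, [exists l, f l == ord0] & embF f = k.
Proof.
move=> kH k_range; have [l0 kl0] := mink_attained k.
have [x [xE x0 <-]] : exists x : 'I_4 -> int,
    [/\ forall l, 4 * x l = k l - k l0, x l0 = 0 & embH x = k].
  by apply: inH_embH kH _ => l; rewrite -kl0 mink_le.
rewrite -kl0 in xE.
have x_range l : 0 <= x l <= N%:Z.
  have := xE l; have := mink_le k l; have := le_maxk k l; lia.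
exists [ffun l => inord `|x l|%N].
  by apply/existsP; exists l0; rewrite ffunE x0 -val_eqE /= inordK.
congr embH; apply: funext => l; have /andP[x_ge0 x_le] := x_range l.
by rewrite ffunE inordK ?gez0_abs //; lia.
Qed.
End EmbF.

Local Open Scope classical_set_scope.

Lemma Hcirc_image m : Hcirc m.+1 =
  embF @` [set f | f \in [pred f : {ffun 'I_4 -> 'I_m.+1} | [exists l, f l == ord0]]].
Proof.
apply/seteqP; split => [k [kH k_range] | _ [f _ <-]].
  have [l0 kl0] := mink_attained k; have [l1 kl1] := maxk_attained k.
  have k_lt : maxk k - mink k < 4 * m.+1%:Z.
    by have := k_range l1 l0; rewrite kl0 kl1 ltr_norml => /andP[].
  by have [f f_hits0 <-] := inH_embF kH k_lt; exists f.
split=> [|i l]; first exact: embH_inH.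
rewrite embF_sub ltr_norml; have := ltn_ord (f i); have := ltn_ord (f l); lia.
Qed.

Lemma Hij_image m i j : (0 < i)%N -> (0 < j)%N -> Hij m.+1 i j =
  embF @` [set f | f \in [pred f : {ffun 'I_4 -> 'I_m.+2} |
     (#|[set l | f l == ord_max]%SET| == i) && (#|[set l | f l == ord0]%SET| == j)]].
Proof.
move=> i_gt0 j_gt0; apply/seteqP; split => [k [kH k_range ci cj] | _ [f /= + <-]].
  have k_lt : maxk k - mink k < 4 * m.+2%:Z by rewrite k_range; lia.
  have [f /existsP[l0 /eqP fl0] ek] := inH_embF kH k_lt.
  have [l1 kl1] := maxk_attained k.
  have fl1 : f l1 = ord_max.
    apply/val_inj/eqP; rewrite /= -eqz_nat; apply/eqP.
    have := embF_sub f l1 l0; rewrite fl0 -(mink_embF fl0) ek -kl1 k_range /=; lia.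
  by exists f; rewrite //= inE -ci -cj -ek (maxset_embF fl1) (minset_embF fl0) !eqxx.
rewrite inE => /andP[/eqP ci /eqP cj].
have /card_gt0P[l1] : (0 < #|[set l | f l == ord_max]%SET|)%N by rewrite ci.
have /card_gt0P[l0] : (0 < #|[set l | f l == ord0]%SET|)%N by rewrite cj.
rewrite !inE => /eqP fl0 /eqP fl1.
split; [exact: embH_inH | | by rewrite (maxset_embF fl1) | by rewrite (minset_embF fl0)].
by rewrite (maxk_embF fl1) (mink_embF fl0) embF_sub fl0 fl1 subr0.
Qed.

Theorem lemma3p13 (n : nat) : (1 <= n)%N ->
  (Hcirc n #= `I_(n ^ 4 - (n - 1) ^ 4))%card /\
  (forall i j : nat, (0 < i)%N -> (0 < j)%N -> (i + j <= 4)%N ->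
     (Hij n i j #= `I_(4`! %/ (i`! * j`! * (4 - i - j)`!) * (n - 1) ^ (4 - i - j)))%card).
Proof.
case: n => [//|m] _; split => [|i j i_gt0 j_gt0 ij_le4].
  have -> : (m.+1 ^ 4 - (m.+1 - 1) ^ 4)%N =
            #|[pred f : {ffun 'I_4 -> 'I_m.+1} | [exists l, f l == ord0]]|.
    by rewrite card_ffun_hit !card_ord subn1.
  rewrite Hcirc_image; apply: card_eq_image_finpred => f1 f2.
  by rewrite !inE => /existsP[l1 /eqP f1l1] /existsP[l2 /eqP f2l2]; exact: embF_inj f1l1 f2l2.
have -> : (4`! %/ (i`! * j`! * (4 - i - j)`!) * (m.+1 - 1) ^ (4 - i - j))%N =
          #|[pred f : {ffun 'I_4 -> 'I_m.+2} |
             (#|[set l | f l == ord_max]%SET| == i) && (#|[set l | f l == ord0]%SET| == j)]|.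
  by rewrite card_ffun_preimage_sizes // !card_ord bin_mul_bin // subn1 subn2.
rewrite Hij_image //; apply: card_eq_image_finpred => f1 f2.
rewrite !inE => /andP[_ /eqP zero1] /andP[_ /eqP zero2].
have /card_gt0P[l1] : (0 < #|[set l | f1 l == ord0]%SET|)%N by rewrite zero1.
have /card_gt0P[l2] : (0 < #|[set l | f2 l == ord0]%SET|)%N by rewrite zero2.
by rewrite !inE => /eqP f2l2 /eqP f1l1; exact: embF_inj f1l1 f2l2.
Qed.
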